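(* Let $p\ge2$ be a fixed integer, and let $\lambda=[a_0,a_1,\ldots]_p$ and $\mu=[b_0,b_1,\ldots]_p$ be partitions in $\mathcal P$. Fix an index $i$ and let $m=\min\{a_i,b_i\}$. Let $\tilde\lambda$ be obtained from $\lambda$ by replacing $a_i$ with $a_i-m$, and $\tilde\mu$ be obtained from $\mu$ by replacing $b_i$ with $b_i-m$ (i.e. removing $m$ entries equal to $p^i$ from each). Then $\lambda$ stably embeds into $\mu$ if and only if $\tilde\lambda$ stably embeds into $\tilde\mu$.
   Context: $\mathcal P$ is the set of integral partitions (finite nonincreasing sequences of positive integers) all of whose entries are powers $p^k$, $k\ge0$. The notation $[a_0,a_1,\ldots,a_s]_p$ denotes the partition in $\mathcal P$ having exactly $a_k$ entries equal to $p^k$ for each $k$. The empty partition is allowed and embeds into every partition. The product $\lambda\times\nu$ is the partition of all products $\lambda_i\nu_j$, reordered nonincreasingly. $\lambda=[\lambda_1,\ldots,\lambda_m]$ embeds into $\mu=[\mu_1,\ldots,\mu_n]$, written $\lambda\hookrightarrow\mu$, if there is a map $\varphi:\{1,\ldots,m\}\to\{1,\ldots,n\}$ with $\sum_{i\in\varphi^{-1}(j)}\lambda_i\le\mu_j$ for all $j$. $\lambda$ stably embeds into $\mu$ if there is an integral partition $\nu$ with $\lambda\times\nu\hookrightarrow\mu\times\nu$. *)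

From mathcomp Require Import all_boot.
Set Implicit Arguments. Unset Strict Implicit. Unset Printing Implicit Defensive.

Definition is_partition (l : seq nat) : bool :=
  sorted geq l && all (fun x => 0 < x) l.

Definition ppart (p : nat) (a : seq nat) : seq nat :=
  sort geq (flatten [seq nseq (nth 0 a k) (p ^ k) | k <- iota 0 (size a)]).

Definition pprod (l n : seq nat) : seq nat :=
  sort geq [seq x * y | x <- l, y <- n].

Definition embeds (l m : seq nat) : Prop :=
  exists phi : 'I_(size l) -> 'I_(size m),
    forall j : 'I_(size m), \sum_(i | phi i == j) nth 0 l i <= nth 0 m j.

Definition stably_embeds (l m : seq nat) : Prop :=
  exists nu : seq nat, [/\ is_partition nu, nu != [::] & embeds (pprod l nu) (pprod m nu)].

From mathcomp Require Import all_boot.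
Set Implicit Arguments. Unset Strict Implicit. Unset Printing Implicit Defensive.

(* For partitions into powers of p, lambda embeds into mu iff for every j the
   parts >= p^j of lambda sum to at most those of mu: necessity holds for any
   embedding, and sufficiency is the greedy matching of a largest part p^k of
   lambda into a part p^t >= p^k of mu, whose excess splits into copies of p^k.
   A stable embedding can moreover be witnessed by a multiplier nu into powers
   of p: replacing each part y of nu by y * p^(E - e) copies of p^e, with
   p^e <= y < p^(e+1), multiplies all these tail sums of lambda x nu and
   mu x nu by p^E. Finally the tail sums of [a_0, a_1, ...]_p x nu are linear
   in the a_k, so the m common copies of p^i contribute equally to both sides
   and cancel. *)

Definition tailsum (T : nat) (s : seq nat) : nat := \sum_(x <- s | T <= x) x.

Lemma tailsum_perm T s t : perm_eq s t -> tailsum T s = tailsum T t.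
Proof. exact: perm_big. Qed.

Lemma tailsum_cat T s t : tailsum T (s ++ t) = tailsum T s + tailsum T t.
Proof. exact: big_cat. Qed.

Lemma tailsum_cons T x s : tailsum T (x :: s) = (if T <= x then x else 0) + tailsum T s.
Proof. by rewrite /tailsum big_cons; case: ifP. Qed.

Lemma tailsum_nseq T c z : tailsum T (nseq c z) = if T <= z then c * z else 0.
Proof. by rewrite /tailsum big_nseq_cond iter_addn_0 mulnC. Qed.

Lemma tailsum_small T s : {in s, forall z, z < T} -> tailsum T s = 0.
Proof. by move=> sT; rewrite /tailsum big_hasC //; apply/hasPn => z /sT; rewrite -ltnNge. Qed.

Lemma tailsum_gt0_mem T s : 0 < tailsum T s -> exists2 y, y \in s & T <= y.
Proof.
move=> s0; apply/hasP; apply: contraTT s0 => /hasPn sT.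
by rewrite -leqNgt leqn0 tailsum_small // => z /sT; rewrite -ltnNge.
Qed.

Lemma embeds_tailsum T l m : embeds l m -> tailsum T l <= tailsum T m.
Proof.
case=> phi phiP.
rewrite /tailsum (big_nth 0) big_mkord (partition_big phi xpredT) //.
rewrite [X in _ <= X](big_nth 0) big_mkord [X in _ <= X]big_mkcond /=.
apply: leq_sum => j _; case: ifP => Tj.
  apply: leq_trans (phiP j); rewrite [X in _ <= X]big_mkcond [X in X <= _]big_mkcond.
  by apply: leq_sum => i _; case: ifP => // /andP[_ ->].
rewrite leqn0 sum_nat_eq0; apply/forallP => i; apply/implyP => /andP[Ti /eqP phii].
have : nth 0 l i <= nth 0 m j by apply: leq_trans (phiP j); rewrite (bigD1 i) ?phii ?leq_addr.
by move/(leq_trans Ti); rewrite Tj.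
Qed.

(* [embeds] with the assignment given as a map on [nat] that only matters on
   [[0, size l)]: this form is stable under permutations of either side. *)
Definition nat_embeds (l m : seq nat) : Prop :=
  exists f : nat -> nat, (forall i, i < size l -> f i < size m) /\
    (forall j, j < size m -> \sum_(i < size l | f i == j) nth 0 l i <= nth 0 m j).

Lemma nat_embeds_embeds l m : nat_embeds l m -> embeds l m.
Proof.
case=> f [fP fj].
exists (fun i : 'I_(size l) => Ordinal (fP i (ltn_ord i))) => j.
by apply: leq_trans (fj j (ltn_ord j)); rewrite (eq_bigl (fun i : 'I_(size l) => f i == j)).
Qed.

Lemma nat_embeds_nil m : nat_embeds [::] m.
Proof. by exists (fun _ => 0); split => // j _; rewrite big_ord0. Qed.

Lemma nat_embeds_perml l l' m : perm_eq l l' -> nat_embeds l m -> nat_embeds l' m.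
Proof.
rewrite perm_sym => /(perm_iotaP 0) [Is Is_perm El'] [f [fP fj]].
have sIs : size Is = size l' by rewrite El' size_map.
have Is_lt k : k \in Is -> k < size l by rewrite (perm_mem Is_perm) mem_iota.
exists (fun i => f (nth 0 Is i)); split.
  by move=> i il; apply/fP/Is_lt; rewrite mem_nth ?sIs.
move=> j jm; apply: leq_trans (fj j jm); apply/eq_leq.
rewrite -(big_mkord (fun i => f (nth 0 Is i) == j)) -(big_mkord (fun i => f i == j)).
transitivity (\sum_(0 <= i < size l' | f (nth 0 Is i) == j) nth 0 l (nth 0 Is i)).
  rewrite [LHS]big_seq_cond [RHS]big_seq_cond; apply: eq_bigr => i /andP[il _].
  by rewrite El' (nth_map 0) // sIs; rewrite mem_index_iota in il.
rewrite /index_iota !subn0 -sIs.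
rewrite -(big_map (nth 0 Is) (fun k => f k == j) (nth 0 l)) -/(mkseq _ _) mkseq_nth.
exact: perm_big.
Qed.

Lemma nat_embeds_permr l m m' : perm_eq m m' -> nat_embeds l m -> nat_embeds l m'.
Proof.
rewrite perm_sym => /(perm_iotaP 0) [Js Js_perm ->] [f [fP fj]].
have sJs : size Js = size m by rewrite (perm_size Js_perm) size_iota.
have Js_mem k : (k \in Js) = (k < size m) by rewrite (perm_mem Js_perm) mem_iota.
have Js_uniq : uniq Js by rewrite (perm_uniq Js_perm) iota_uniq.
exists (fun i => index (f i) Js); rewrite size_map sJs; split.
  by move=> i il; rewrite -sJs index_mem Js_mem fP.
move=> j jm; have jJs : j < size Js by rewrite sJs.
rewrite (nth_map 0) //; apply: leq_trans (fj _ _); last by rewrite -Js_mem mem_nth.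
apply: eq_leq; apply: eq_bigl => i; apply/eqP/eqP => [<-|->].
  by rewrite nth_index // Js_mem fP.
by rewrite index_uniq.
Qed.

Lemma sum_ltn_leq n (g : nat -> nat) (F : 'I_n -> nat) c z :
  (forall j, j < c -> \sum_(i < n | g i == j) F i <= z) ->
  \sum_(i < n | g i < c) F i <= c * z.
Proof.
elim: c => [|c IHc] gz; first by rewrite big_pred0 // => i; rewrite ltn0.
rewrite (bigID (fun i : 'I_n => g i < c)) /= mulSn [z + _]addnC.
apply: leq_add.
  rewrite (eq_bigl (fun i : 'I_n => g i < c)) => [|i]; last by apply: andb_idl => /ltnW.
  by apply: IHc => j jc; apply: gz; rewrite ltnW.
rewrite (eq_bigl (fun i : 'I_n => g i == c)) => [|i]; first exact: gz.
by rewrite ltnS -leqNgt -eqn_leq.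
Qed.

(* The target part [y] absorbs [x] and splits the rest [c * z] into [c] parts [z]. *)
Lemma nat_embeds_cons x l y m c z :
  nat_embeds l (nseq c z ++ m) -> x + c * z <= y -> nat_embeds (x :: l) (y :: m).
Proof.
case=> f [fP fj] xy; rewrite size_cat size_nseq in fP fj.
pose g i := if i is i'.+1 then (if f i' < c then 0 else (f i' - c).+1) else 0.
exists g; split.
  case=> [|i] //= il; case: ifP => // /negbT; rewrite -leqNgt => cf.
  by rewrite ltnS ltn_subLR // fP.
case=> [|j] jm; rewrite big_mkcond big_ord_recl /= -big_mkcond /=.
  rewrite (eq_bigl (fun i : 'I_(size l) => f i < c)); last by move=> i; rewrite add0n; case: ltnP.
  apply: leq_trans xy; rewrite leq_add2l; apply: sum_ltn_leq => k kc.
  by have := fj k; rewrite nth_cat size_nseq kc nth_nseq kc; apply; rewrite ltn_addr.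
rewrite add0n (eq_bigl (fun i : 'I_(size l) => f i == c + j)) => [|i]; last first.
  rewrite add0n; case: ltnP => cf; first by apply/esym/negbTE; rewrite neq_ltn ltn_addr.
  by rewrite eqSS -(eqn_add2l c) subnKC.
have := fj (c + j); rewrite ltn_add2l => /(_ jm).
by rewrite nth_cat size_nseq ltnNge leq_addr /= addKn.
Qed.

Lemma seq_max_mem (s : seq nat) :
  s != [::] -> exists2 x, x \in s & {in s, forall z, z <= x}.
Proof.
move=> s0; have : sort geq s != [::] by rewrite -size_eq0 size_sort size_eq0.
case Es: (sort geq s) => [|x t] // _.
have : sorted geq (x :: t) by rewrite -Es; apply: sort_sorted => u v; apply: leq_total.
move=> /= /(order_path_min (fun _ _ _ le1 le2 => leq_trans le2 le1))/allP => xt.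
exists x; first by rewrite -(mem_sort geq) Es mem_head.
by move=> z; rewrite -(mem_sort geq) Es in_cons => /predU1P [->|/xt].
Qed.

Lemma tailsum_rem_max T l m x y c :
  x \in l -> {in l, forall z, z <= x} -> y \in m -> y = x + c * x ->
  tailsum T l <= tailsum T m -> tailsum T (rem x l) <= tailsum T (nseq c x ++ rem y m).
Proof.
move=> xl xmax ym yc.
rewrite (tailsum_perm _ (perm_to_rem xl)) (tailsum_perm _ (perm_to_rem ym)).
rewrite !tailsum_cons tailsum_cat tailsum_nseq.
have [Tx|xT] := leqP T x.
  by rewrite yc (leq_trans Tx (leq_addr _ _)) -addnA leq_add2l.
by rewrite tailsum_small // => z /mem_rem /xmax zx; apply: leq_ltn_trans zx xT.
Qed.

Definition powers_of (p : nat) (s : seq nat) : Prop :=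
  {in s, forall x, exists k, x = p ^ k}.

Lemma powers_of_rem p x s : powers_of p s -> powers_of p (rem x s).
Proof. by move=> sp z /mem_rem; apply: sp. Qed.

Lemma expn_split p k t : 0 < p -> k <= t -> p ^ t = p ^ k + (p ^ (t - k) - 1) * p ^ k.
Proof.
move=> p0 kt; rewrite mulnBl mul1n -expnD subnK // addnC subnK //.
by rewrite leq_pexp2l.
Qed.

Section PowerEmbedding.

Variable p : nat.
Hypothesis hp : 1 < p.

Lemma tailsum_pow_nat_embeds l m :
  powers_of p l -> powers_of p m ->
  (forall j, tailsum (p ^ j) l <= tailsum (p ^ j) m) -> nat_embeds l m.
Proof.
elim: {l}(size l).+1 {-2}l (ltnSn (size l)) m => // n IHn l ln m lp mp lm.
have [->|l0] := eqVneq l [::]; first exact: nat_embeds_nil.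
have [x xl xmax] := seq_max_mem l0.
have [k xk] := lp x xl.
have [y ym xy] : exists2 y, y \in m & x <= y.
  apply: tailsum_gt0_mem; rewrite xk; apply: leq_trans (lm k).
  by rewrite (tailsum_perm _ (perm_to_rem xl)) tailsum_cons -xk leqnn addn_gt0 xk expn_gt0 (ltnW hp).
have [t yk] := mp y ym.
have kt : k <= t by rewrite -(leq_exp2l _ _ hp) -xk -yk.
have yc : y = x + (p ^ (t - k) - 1) * x by rewrite yk xk (expn_split (ltnW hp) kt).
apply: (nat_embeds_perml (l := x :: rem x l)); first by rewrite perm_sym perm_to_rem.
apply: (nat_embeds_permr (m := y :: rem y m)); first by rewrite perm_sym perm_to_rem.
apply: nat_embeds_cons (eq_leq (esym yc)).
apply: IHn; first by rewrite size_rem // -ltnS prednK // lt0n size_eq0.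
- exact: powers_of_rem.
- by move=> z; rewrite mem_cat => /orP [/nseqP [-> _]|]; [exists k | apply: powers_of_rem].
by move=> j; apply: tailsum_rem_max.
Qed.

End PowerEmbedding.

Lemma tailsum_pprod T l n :
  tailsum T (pprod l n) = \sum_(x <- l) tailsum T [seq x * y | y <- n].
Proof.
rewrite /tailsum /pprod (perm_big _ (permEl (perm_sort _ _))) big_mkcond big_allpairs_dep.
by apply: eq_bigr => x _; rewrite big_map [RHS]big_mkcond.
Qed.

Lemma tailsum_pprod_sort T l n : tailsum T (pprod l (sort geq n)) = tailsum T (pprod l n).
Proof.
rewrite !tailsum_pprod; apply: eq_bigr => x _.
by apply/tailsum_perm/perm_map; rewrite perm_sort.
Qed.

Lemma big_ppart p a (G : nat -> nat) :
  \sum_(x <- ppart p a) G x = \sum_(k < size a) nth 0 a k * G (p ^ k).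
Proof.
rewrite /ppart (perm_big _ (permEl (perm_sort _ _))) big_flatten big_map.
have -> : iota 0 (size a) = index_iota 0 (size a) by rewrite /index_iota subn0.
rewrite big_mkord.
by apply: eq_bigr => k _; rewrite big_nseq iter_addn_0 mulnC.
Qed.

Lemma big_ppart_widen p a N (G : nat -> nat) : size a <= N ->
  \sum_(x <- ppart p a) G x = \sum_(k < N) nth 0 a k * G (p ^ k).
Proof.
move=> aN; rewrite big_ppart (big_ord_widen _ (fun k => nth 0 a k * G (p ^ k)) aN).
by rewrite big_mkcond; apply: eq_bigr => k _; case: ltnP => // /(nth_default 0) ->.
Qed.

Lemma big_ppart_set_nth p a i m (G : nat -> nat) : m <= nth 0 a i ->
  \sum_(x <- ppart p a) G x =
  \sum_(x <- ppart p (set_nth 0 a i (nth 0 a i - m))) G x + m * G (p ^ i).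
Proof.
move=> ma; set N := maxn (size a) i.+1.
have iN : i < N by rewrite leq_maxr.
rewrite !(@big_ppart_widen p _ N) ?size_set_nth ?geq_max ?iN ?leq_maxl //.
rewrite (bigD1 (Ordinal iN)) // [X in _ = X + _](bigD1 (Ordinal iN)) //= nth_set_nth /= eqxx.
rewrite -addnA [_ + m * _]addnC addnA -mulnDl subnK //; congr (_ + _).
by apply: eq_bigr => k ki; rewrite nth_set_nth /= ifN.
Qed.

Lemma powers_of_ppart p a : powers_of p (ppart p a).
Proof. by move=> x; rewrite mem_sort => /flattenP [_ /mapP [k _ ->] /nseqP [-> _]]; exists k. Qed.

Lemma powers_of_pprod p l n : powers_of p l -> powers_of p n -> powers_of p (pprod l n).
Proof.
move=> lp np z; rewrite mem_sort => /allpairsP [[x y] [/= /lp [k ->] /np [t ->] ->]].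
by exists (k + t); rewrite expnD.
Qed.

Section PowerRounding.

Variable p : nat.
Hypothesis hp : 1 < p.

Lemma leq_pow_mul_trunc_log j k y : 0 < y ->
  (p ^ j <= p ^ k * p ^ trunc_log p y) = (p ^ j <= p ^ k * y).
Proof.
move=> y0; apply/idP/idP => jy.
  by apply: leq_trans jy _; rewrite leq_mul2l trunc_logP ?orbT.
rewrite -expnD leq_exp2l // -ltnS -(ltn_exp2l _ _ hp).
apply: leq_ltn_trans jy _.
by rewrite -addnS expnD ltn_mul2l expn_gt0 (ltnW hp) trunc_log_ltn.
Qed.

Definition maxlog (n : seq nat) : nat := \max_(y <- n) trunc_log p y.

(* Each part [y] becomes [y * p ^ (maxlog n - e)] parts [p ^ e], [e = trunc_log p y]:
   all products with [p ^ k] scale by [p ^ maxlog n], and against thresholds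
   [p ^ j] the part [p ^ e] behaves like [y]. *)
Definition pround (n : seq nat) : seq nat :=
  flatten [seq nseq (y * p ^ (maxlog n - trunc_log p y)) (p ^ trunc_log p y) | y <- n].

Lemma tailsum_pround k j (n : seq nat) : {in n, forall y, 0 < y} ->
  tailsum (p ^ j) [seq p ^ k * z | z <- pround n] =
  p ^ maxlog n * tailsum (p ^ j) [seq p ^ k * y | y <- n].
Proof.
move=> n0; rewrite /tailsum !big_map big_flatten big_map big_distrr /= [RHS]big_mkcond.
rewrite big_seq [RHS]big_seq; apply: eq_bigr => y yn.
have eE : trunc_log p y <= maxlog n by apply: (@leq_bigmax_seq _ n xpredT).
rewrite big_nseq_cond iter_addn_0 leq_pow_mul_trunc_log ?n0 //; case: ifP => // _.
rewrite -[in RHS](subnK eE) expnD.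
set u := p ^ k; set v := p ^ trunc_log p y; set w := p ^ (maxlog n - trunc_log p y).
by rewrite mulnACA [RHS]mulnC [w * v]mulnC.
Qed.

Lemma tailsum_pprod_pround l (n : seq nat) j : powers_of p l -> {in n, forall y, 0 < y} ->
  tailsum (p ^ j) (pprod l (pround n)) = p ^ maxlog n * tailsum (p ^ j) (pprod l n).
Proof.
move=> lp n0; rewrite !tailsum_pprod big_distrr /= !big_seq.
by apply: eq_bigr => x /lp [k ->]; apply: tailsum_pround.
Qed.

Lemma powers_of_pround n : powers_of p (pround n).
Proof.
by move=> z /flattenP [_ /mapP [y _ ->] /nseqP [-> _]]; exists (trunc_log p y).
Qed.

Lemma pround_neq0 (n : seq nat) : {in n, forall y, 0 < y} -> n != [::] -> pround n != [::].
Proof.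
case: n => // y n n0 _; rewrite /pround /= -size_eq0 size_cat size_nseq -lt0n.
by rewrite ltn_addr // muln_gt0 n0 ?mem_head // expn_gt0 (ltnW hp).
Qed.

End PowerRounding.

Lemma stably_embeds_powE p l m : 1 < p -> powers_of p l -> powers_of p m ->
  stably_embeds l m <-> exists n, [/\ powers_of p n, n != [::] &
    forall j, tailsum (p ^ j) (pprod l n) <= tailsum (p ^ j) (pprod m n)].
Proof.
move=> hp lp mp; split.
  case=> n [/andP[_ /allP n0] n_nil /embeds_tailsum lmn].
  exists (pround p n); split; [exact: powers_of_pround | exact: pround_neq0 | move=> j].
  by rewrite !tailsum_pprod_pround // leq_pmul2l // expn_gt0 (ltnW hp).
case=> n [np n_nil lmn]; exists (sort geq n); split.
- apply/andP; split; first by apply: sort_sorted => u v; apply: leq_total.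
  by apply/allP => y; rewrite mem_sort => /np [k ->]; rewrite expn_gt0 (ltnW hp).
- by rewrite -size_eq0 size_sort size_eq0.
have snp : powers_of p (sort geq n) by move=> y; rewrite mem_sort; apply: np.
apply/nat_embeds_embeds/(tailsum_pow_nat_embeds hp); try exact: powers_of_pprod.
by move=> j; rewrite 2!tailsum_pprod_sort.
Qed.

Theorem corollary3p4 (p : nat) (hp : 2 <= p) (a b : seq nat) (i : nat) :
  let m := minn (nth 0 a i) (nth 0 b i) in
  stably_embeds (ppart p a) (ppart p b) <->
  stably_embeds (ppart p (set_nth 0 a i (nth 0 a i - m)))
                (ppart p (set_nth 0 b i (nth 0 b i - m))).
Proof.
move=> m; set a' := set_nth 0 a i _; set b' := set_nth 0 b i _.
have powE (a1 b1 : seq nat) := stably_embeds_powE hp (@powers_of_ppart p a1) (@powers_of_ppart p b1).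
have cancel n j : (tailsum (p ^ j) (pprod (ppart p a) n) <= tailsum (p ^ j) (pprod (ppart p b) n))
    = (tailsum (p ^ j) (pprod (ppart p a') n) <= tailsum (p ^ j) (pprod (ppart p b') n)).
  rewrite !tailsum_pprod (@big_ppart_set_nth p a i m _ (geq_minl _ _)).
  by rewrite (@big_ppart_set_nth p b i m _ (geq_minr _ _)) leq_add2r.
by split=> /powE [n [np n0 lmn]]; apply/powE; exists n; split=> // j; rewrite ?cancel // -cancel.
Qed.
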